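(* Consider a word $uav$ with $a \in A$ and $|ua| = i$. If the attribute $(x_i,y_i)$ at position $i$ satisfies $x_i + y_i > k+1$, then $uav \sim_k uv$.
   Context: $A$ is a finite alphabet and $k\in\mathbb{N}$. A word $a_1\cdots a_\ell$ is a (scattered) subword of $v$ if $v=v_0a_1v_1\cdots a_\ell v_\ell$; Simon's congruence $u\sim_k v$ holds iff $u$ and $v$ have the same subwords of length at most $k$. An $\mathsf{X}$-ranker is a nonempty word over $\{\mathsf{X}_a : a\in A\}$ and a $\mathsf{Y}$-ranker a nonempty word over $\{\mathsf{Y}_a : a\in A\}$; for a word $w$, $\mathsf{X}_a(w)$ is the smallest $a$-position of $w$, $r\mathsf{X}_a(w)$ is the smallest $a$-position greater than $r(w)$, $\mathsf{Y}_a(w)$ is the greatest $a$-position, and $r\mathsf{Y}_a(w)$ is the greatest $a$-position smaller than $r(w)$ (possibly undefined). The attribute of position $i$ of a word is $(x_i,y_i)$, where $x_i$ is the length of a shortest $\mathsf{X}$-ranker reaching $i$ and $y_i$ is the length of a shortest $\mathsf{Y}$-ranker reaching $i$. *)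

(* Words over a finite alphabet A are sequences [seq A].
   Positions of a word w are 1-indexed: 1 <= j <= size w, with letter nth _ w j.-1. *)
From mathcomp Require Import all_boot.
Set Implicit Arguments. Unset Strict Implicit. Unset Printing Implicit Defensive.

Section Rankers.
Variable A : finType.
Implicit Types (w u v s : seq A) (a : A).

Definition subword s w : bool := subseq s w.
Definition simon (k : nat) u v : Prop :=
  forall s, size s <= k -> subword s u = subword s v.

(* smallest a-position of w strictly greater than p *)
Definition next_pos w a (p : nat) : option nat :=
  let t := drop p w in
  if a \in t then Some (p + index a t).+1 else None.

(* greatest a-position of w strictly smaller than p *)
Definition prev_pos w a (p : nat) : option nat :=
  let t := take p.-1 w in
  if a \in t then Some (size t - index a (rev t)) else None.

(* An X-ranker X_{a1}...X_{an} is represented by the nonempty word [:: a1; ...; an],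
   evaluated left to right: X_a(w) = smallest a-position (i.e. > 0),
   r X_a (w) = smallest a-position > r(w). *)
Definition evalX w (r : seq A) : option nat :=
  foldl (fun o a => obind (next_pos w a) o) (Some 0) r.

(* Y-rankers: Y_a(w) = greatest a-position (i.e. < size w + 1),
   r Y_a (w) = greatest a-position < r(w). *)
Definition evalY w (r : seq A) : option nat :=
  foldl (fun o a => obind (prev_pos w a) o) (Some (size w).+1) r.

Definition reachesX w (r : seq A) (i : nat) : Prop := 0 < size r /\ evalX w r = Some i.
Definition reachesY w (r : seq A) (i : nat) : Prop := 0 < size r /\ evalY w r = Some i.

Definition shortestX w i n : Prop :=
  (exists r, reachesX w r i /\ size r = n) /\ (forall r, reachesX w r i -> n <= size r).
Definition shortestY w i n : Prop :=
  (exists r, reachesY w r i /\ size r = n) /\ (forall r, reachesY w r i -> n <= size r).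

Definition attribute w i (x y : nat) : Prop := shortestX w i x /\ shortestY w i y.

End Rankers.

(* If uv misses a subword s of uav with |s| <= k, then s = s1 a s2 where s1
   embeds into u but s1 a does not, and s2 embeds into v but a s2 does not.
   Evaluating greedily, the X-ranker s1 a and the Y-ranker (rev s2) a both
   land on the distinguished letter a, so x_i + y_i <= |s1| + |s2| + 2
   = |s| + 1 <= k + 1. *)
From mathcomp Require Import all_boot.
From mathcomp Require Import zify.

Set Implicit Arguments.
Unset Strict Implicit.
Unset Printing Implicit Defensive.

Section Rankers.
Variable A : finType.
Implicit Types (w u v s r : seq A) (a c x : A).

Lemma subseq_insert_witness u a v s :
  subseq s (u ++ a :: v) -> ~~ subseq s (u ++ v) ->
  exists s1 s2, [/\ s = s1 ++ a :: s2, subseq s1 u, ~~ subseq (rcons s1 a) u,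
                    subseq s2 v & ~~ subseq (a :: s2) v].
Proof.
elim: u s => [|x u IHu] [|c s] sub nsub; rewrite ?sub0seq // /= in sub nsub.
  case: (eqVneq c a) sub nsub => [-> sub_v nsub_v | _ sub_v /negP //].
  by exists [::], s.
case: (eqVneq c x) sub nsub => [-> | neq_cx] sub nsub.
  have [s1 [s2 [-> sub1 nsub1 sub2 nsub2]]] := IHu s sub nsub.
  by exists (x :: s1), s2; rewrite /= eqxx.
have [s1 [s2 [def_s sub1 nsub1 sub2 nsub2]]] := IHu (c :: s) sub nsub.
exists s1, s2; split=> //; first exact: subseq_trans sub1 (subseq_cons u x).
have [t def_s1a] : exists t, rcons s1 a = c :: t.
  case: s1 def_s {sub1 nsub1} => [|d s1] [<- _].
    by exists [::].
  by exists (rcons s1 a).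
by rewrite def_s1a /= (negbTE neq_cx) -def_s1a.
Qed.

Lemma foldl_obind_None (f : A -> nat -> option nat) r :
  foldl (fun o c => obind (f c) o) None r = None.
Proof. by elim: r. Qed.

Lemma next_pos_drop w c p :
  next_pos w c p = omap (addn p) (next_pos (drop p w) c 0).
Proof. by rewrite /next_pos drop0; case: ifP => //= _; rewrite add0n addnS. Qed.

Lemma next_pos_le_size w c p q : next_pos w c p = Some q -> q <= size w.
Proof.
rewrite /next_pos; case: ifP => // c_in [<-].
by move: c_in; rewrite -index_mem size_drop -ltn_subRL.
Qed.

Lemma foldl_next_pos_drop w p r :
  foldl (fun o c => obind (next_pos w c) o) (Some p) r
  = omap (addn p) (evalX (drop p w) r).
Proof.
elim: r w p => [|c r IHr] w p /=; first by rewrite addn0.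
rewrite /evalX /= next_pos_drop.
case: (next_pos (drop p w) c 0) => [q|] /=; last by rewrite !foldl_obind_None.
rewrite !IHr drop_drop addnC.
by case: (evalX _ r) => //= n; rewrite -addnA addnCA.
Qed.

Lemma evalX_cons_head x w r : evalX (x :: w) (x :: r) = omap S (evalX w r).
Proof.
rewrite /evalX /=.
have -> : next_pos (x :: w) x 0 = Some 1 by rewrite /next_pos /= inE eqxx.
by rewrite foldl_next_pos_drop /= drop0.
Qed.

Lemma evalX_cons_skip x w c r : c != x ->
  evalX (x :: w) (c :: r) = omap S (evalX w (c :: r)).
Proof.
move=> neq_cx; rewrite /evalX /=.
have -> : next_pos (x :: w) c 0 = omap S (next_pos w c 0).
  rewrite /next_pos !drop0 /= inE (negbTE neq_cx) /= eq_sym (negbTE neq_cx).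
  by case: ifP.
case: (next_pos w c 0) => [q|] /=; last by rewrite !foldl_obind_None.
by rewrite !foldl_next_pos_drop /=; case: (evalX _ r).
Qed.

Lemma evalX_rcons_cat u c t r : subseq r u -> ~~ subseq (rcons r c) u ->
  evalX (u ++ c :: t) (rcons r c) = Some (size u).+1.
Proof.
elim: u r => [|x u IHu] r.
  by rewrite subseq0 => /eqP -> _; rewrite evalX_cons_head.
rewrite cat_cons; case: r => [|d r] sub_r nsub_r.
  move: nsub_r; rewrite sub1seq inE negb_or => /andP [neq_cx c_notin_u].
  by rewrite evalX_cons_skip // (IHu [::]) ?sub0seq ?sub1seq.
case: (eqVneq d x) sub_r nsub_r => [-> | neq_dx]; rewrite /= ?eqxx ?(negbTE neq_dx).
  by move=> sub_r nsub_r; rewrite evalX_cons_head IHu.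
by move=> sub_r nsub_r; rewrite evalX_cons_skip // -rcons_cons IHu.
Qed.

Lemma prev_pos_rev w c p : p <= (size w).+1 ->
  prev_pos w c p
  = omap (fun q => (size w).+1 - q) (next_pos (rev w) c ((size w).+1 - p)).
Proof.
move=> le_p; rewrite /prev_pos /next_pos drop_rev.
have -> : size w - ((size w).+1 - p) = p.-1 by lia.
rewrite mem_rev; case: ifP => //= c_in; congr Some.
have size_take : size (take p.-1 w) = p.-1 by rewrite size_takel //; lia.
have : index c (rev (take p.-1 w)) < size (rev (take p.-1 w)).
  by rewrite index_mem mem_rev.
by rewrite size_rev size_take; lia.
Qed.

Lemma foldl_prev_pos_rev w p r : p <= (size w).+1 ->
  foldl (fun o c => obind (prev_pos w c) o) (Some p) r
  = omap (fun q => (size w).+1 - q)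
      (foldl (fun o c => obind (next_pos (rev w) c) o) (Some ((size w).+1 - p)) r).
Proof.
elim: r p => [|c r IHr] p le_p /=; first by rewrite subKn.
rewrite prev_pos_rev //.
case def_q: (next_pos (rev w) c _) => [q|] /=; last by rewrite !foldl_obind_None.
have := next_pos_le_size def_q; rewrite size_rev => le_q.
by rewrite IHr ?subKn //; lia.
Qed.

Lemma evalY_rev w r :
  evalY w r = omap (fun q => (size w).+1 - q) (evalX (rev w) r).
Proof. by rewrite /evalY foldl_prev_pos_rev // subnn. Qed.

Lemma evalY_rcons_cat u a v s : subseq s v -> ~~ subseq (a :: s) v ->
  evalY (u ++ a :: v) (rcons (rev s) a) = Some (size u).+1.
Proof.
move=> sub_s nsub_s.
rewrite evalY_rev rev_cat rev_cons cat_rcons evalX_rcons_cat.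
- by rewrite /= size_cat /= size_rev; congr Some; lia.
- by rewrite subseq_rev.
- by rewrite -rev_cons subseq_rev.
Qed.

End Rankers.

Theorem proposition3 (A : finType) (k : nat) (u v : seq A) (a : A) (i xi yi : nat) :
  size (rcons u a) = i ->
  attribute (u ++ a :: v) i xi yi ->
  k.+1 < xi + yi ->
  simon k (u ++ a :: v) (u ++ v).
Proof.
rewrite size_rcons => <- [[_ minX] [_ minY]] lt_k s le_sk; rewrite /subword.
apply/idP/idP => [sub_uav | sub_uv]; last first.
  by apply: subseq_trans sub_uv _; rewrite cat_subseq // subseq_cons.
apply: contraT => nsub_uv.
have [s1 [s2 [def_s sub1 nsub1 sub2 nsub2]]] :=
  subseq_insert_witness sub_uav nsub_uv.
have reachX : reachesX (u ++ a :: v) (rcons s1 a) (size u).+1.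
  by split; [rewrite size_rcons | exact: evalX_rcons_cat].
have reachY : reachesY (u ++ a :: v) (rcons (rev s2) a) (size u).+1.
  by split; [rewrite size_rcons | exact: evalY_rcons_cat].
have := minX _ reachX; have := minY _ reachY.
rewrite !size_rcons size_rev; move: le_sk; rewrite def_s size_cat /=.
lia.
Qed.
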